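(* Let $\mathbf{G}$ be the graph with vertex set consisting of $\mathbb{Z}_+=\{0,1,2,\dots\}$ together with additional vertices such that, for each $n\ge0$, $n$ and $n+1$ are joined by $2^n$ disjoint paths of length $2$ (each through its own new middle vertex), and there are no other edges. Then $\mathbf{G}$ is transient, but two independent simple random walks on $\mathbf{G}$ started from the same vertex meet infinitely many times almost surely. *)

From mathcomp Require Import all_boot all_order all_algebra.
Set Implicit Arguments. Unset Strict Implicit. Unset Printing Implicit Defensive.
Import Order.TTheory GRing.Theory Num.Theory.
Local Open Scope ring_scope.

(* Vertices of G: [inl n] is the integer vertex n in Z_+;
   [inr (n, i)] is the middle vertex of the i-th path of length 2 joining
   n and n+1 (meaningful only for i < 2^n). *)
Definition vertex : Type := (nat + (nat * nat))%type.

Definition valid_vertex (v : vertex) : bool :=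
  match v with inl _ => true | inr (n, i) => (i < 2 ^ n)%N end.

Definition G_adj (x y : vertex) : bool :=
  match x, y with
  | inl m, inr (n, i) => ((i < 2 ^ n)%N && ((m == n) || (m == n.+1)))
  | inr (n, i), inl m => ((i < 2 ^ n)%N && ((m == n) || (m == n.+1)))
  | _, _ => false
  end.

Definition nbrs (x : vertex) : seq vertex :=
  match x with
  | inl n =>
      [seq inr (n, i) | i <- iota 0 (2 ^ n)] ++
      (if n is m.+1 then [seq inr (m, i) | i <- iota 0 (2 ^ m)] else [::])
  | inr (n, _) => [:: inl n; inl n.+1]
  end.

(* All trajectories of length n (n steps, n+1 vertices, starting at v) of
   simple random walk on G, each with its probability
   prod_t 1/deg(X_t). *)
Fixpoint walks (v : vertex) (n : nat) : seq (seq vertex * rat) :=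
  match n with
  | 0 => [:: ([:: v], 1)]
  | n'.+1 =>
      flatten [seq [seq (rcons p.1 y, p.2 / (size (nbrs (last v p.1)))%:R)
                   | y <- nbrs (last v p.1)]
              | p <- walks v n']
  end.

(* P_v( SRW returns to v at some time t in {1,...,n} ). *)
Definition return_prob (v : vertex) (n : nat) : rat :=
  \sum_(p <- walks v n) (if has (pred1 v) (behead p.1) then p.2 else 0).

Definition meetings (v : vertex) (n : nat) (p q : seq vertex) : nat :=
  count (fun t => nth v p t == nth v q t) (iota 1 n).

(* For two independent SRWs X, Y both started at v:
   P( #{t in 1..n : X_t = Y_t} >= k ). *)
Definition meet_prob (v : vertex) (k n : nat) : rat :=
  \sum_(p <- walks v n) \sum_(q <- walks v n)
     (if (k <= meetings v n p.1 q.1)%N then p.2 * q.2 else 0).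

(* Transience: for every vertex v, P_v(ever return to v) < 1, where
   P_v(ever return) = sup_n return_prob v n (continuity of measure). *)
Definition G_transient : Prop :=
  forall v : vertex, valid_vertex v ->
    exists eps : rat, 0 < eps /\ forall n, return_prob v n <= 1 - eps.

(* Two independent SRWs from the same vertex meet infinitely often a.s.:
   P(infinitely many meetings) = inf_k sup_n meet_prob v k n = 1. *)
Definition G_meet_io_as : Prop :=
  forall v : vertex, valid_vertex v ->
    forall (k : nat) (eps : rat), 0 < eps ->
      exists n, 1 - eps <= meet_prob v k n.

From mathcomp Require Import all_boot all_order all_algebra.
From mathcomp Require Import zify ring lra.
Set Implicit Arguments. Unset Strict Implicit. Unset Printing Implicit Defensive.
Import Order.TTheory GRing.Theory Num.Theory.
Local Open Scope ring_scope.

(* Transience: the voltage [phi] of a unit current flow to infinity is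
   superharmonic, hence so is [min 1 (phi / phi v)]; it dominates the
   probability of hitting [v], and its average over the neighbours of [v] is
   at most 5/6.
   Meetings: from integer vertices [a <> b], every two steps the difference of
   levels behaves like a recurrent walk.  [|a - b| + 1] is a supermartingale
   until the walks meet, and from distance at most [M] they meet within [2 M]
   steps with probability at least 18^-M; cutting time into blocks of length
   [2 M] shows that they meet almost surely.  Restarting at a meeting (Markov
   property) then yields any number of meetings. *)

(** * Averages along the walk *)

Definition deg (x : vertex) : nat := size (nbrs x).

Definition avg (f : vertex -> rat) (x : vertex) : rat :=
  (deg x)%:R^-1 * \sum_(y <- nbrs x) f y.

Lemma deg_gt0 x : (0 < deg x)%N.
Proof.
case: x => [n|[n i]] //; rewrite /deg /= size_cat size_map size_iota.
by rewrite addn_gt0 expn_gt0.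
Qed.

Lemma sumr_const_seq (T : Type) (s : seq T) (c : rat) :
  \sum_(i <- s) c = (size s)%:R * c.
Proof. by rewrite big_const_seq count_predT iter_addr_0 mulr_natl. Qed.

Lemma avg_const c x : avg (fun=> c) x = c.
Proof.
by rewrite /avg sumr_const_seq mulrA mulVf ?mul1r // pnatr_eq0 -lt0n deg_gt0.
Qed.

Lemma avg_le f g x : {in nbrs x, forall y, f y <= g y} -> avg f x <= avg g x.
Proof.
move=> fg; rewrite /avg ler_pM2l ?invr_gt0 ?ltr0n ?deg_gt0 //.
by rewrite big_seq [leRHS]big_seq; apply: ler_sum.
Qed.

Lemma avg_ext f g x : {in nbrs x, f =1 g} -> avg f x = avg g x.
Proof. by move=> fg; apply/le_anti; rewrite !avg_le // => y /fg ->. Qed.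

Lemma avg_ge0 f x : (forall y, 0 <= f y) -> 0 <= avg f x.
Proof. by move=> f0; rewrite -(avg_const 0 x); apply: avg_le. Qed.

Lemma avgD f g x : avg (fun y => f y + g y) x = avg f x + avg g x.
Proof. by rewrite /avg big_split mulrDr. Qed.

Lemma avgZ c f x : avg (fun y => c * f y) x = c * avg f x.
Proof. by rewrite /avg -mulr_sumr mulrCA. Qed.

Lemma avg_min f g x :
  avg (fun y => Num.min (f y) (g y)) x <= Num.min (avg f x) (avg g x).
Proof. by rewrite le_min !avg_le // => y _; rewrite ge_min lexx ?orbT. Qed.

Definition Ewalk (v : vertex) (n : nat) (F : seq vertex -> rat) : rat :=
  \sum_(p <- walks v n) p.2 * F p.1.

Lemma walks_head v n p : p \in walks v n -> exists r, p.1 = v :: r.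
Proof.
elim: n p => [|n IH] p /=; first by rewrite inE => /eqP ->; exists [::].
case/flatten_mapP => q /IH [r hr] /mapP [y _ ->] /=.
by rewrite hr; exists (rcons r y).
Qed.

Lemma Ewalk_ext v n F G : {in walks v n, forall p, F p.1 = G p.1} ->
  Ewalk v n F = Ewalk v n G.
Proof. by move=> FG; apply: eq_big_seq => p /FG ->. Qed.

Lemma eq_Ewalk v n F G : F =1 G -> Ewalk v n F = Ewalk v n G.
Proof. by move=> FG; apply: Ewalk_ext => p _. Qed.

Lemma Ewalk0 v F : Ewalk v 0 F = F [:: v].
Proof. by rewrite /Ewalk /= big_seq1 mul1r. Qed.

Lemma Ewalk_last v n F :
  Ewalk v n.+1 F = Ewalk v n (fun p => avg (fun y => F (rcons p y)) (last v p)).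
Proof.
rewrite /Ewalk [walks _ _.+1]/= big_flatten big_map; apply: eq_bigr => p _.
by rewrite big_map /avg mulr_sumr mulr_sumr; apply: eq_bigr => y _; rewrite mulrA.
Qed.

Lemma Ewalk_first v n F :
  Ewalk v n.+1 F = avg (fun y => Ewalk y n (fun p => F (v :: p))) v.
Proof.
elim: n F => [|n IH] F.
  by rewrite Ewalk_last Ewalk0; apply: avg_ext => y _; rewrite Ewalk0.
rewrite Ewalk_last IH; apply: avg_ext => y _.
by rewrite Ewalk_last; apply: Ewalk_ext => p /walks_head [r ->].
Qed.

Lemma Ewalk_const v n c : Ewalk v n (fun=> c) = c.
Proof.
elim: n v => [|n IH] v; first by rewrite Ewalk0.
by rewrite Ewalk_first (avg_ext (g := fun=> c)) ?avg_const // => y _; rewrite IH.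
Qed.

(* From [inl n] the walk steps to a middle vertex of level [n] with probability
   2/3 and of level [n - 1] with probability 1/3 (see [avg_inl]); [lmean f m] is
   the mean of [f] over the middle vertices of level [m]. *)
Definition lmean (f : vertex -> rat) (m : nat) : rat :=
  (2 ^ m)%:R^-1 * \sum_(i <- iota 0 (2 ^ m)) f (inr (m, i)).

Definition lavg (g : nat -> rat) (n : nat) : rat :=
  if n is m.+1 then (2 * g n + g m) / 3 else g 0.

Lemma avg_inl f n : avg f (inl n) = lavg (lmean f) n.
Proof.
rewrite /avg /lavg /lmean /deg /=; case: n => [|m].
  by rewrite big_cat /= !big_cons !big_nil expn0 invr1 !mul1r !addr0.
rewrite size_cat !size_map !size_iota big_cat !big_map /=.
set S1 := \sum_(_ <- _) _; set S0 := \sum_(_ <- _) _.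
rewrite natrD expnS natrM.
have t0 : 0 < (2 ^ m)%:R :> rat by rewrite ltr0n expn_gt0.
by field; rewrite !lt0r_neq0 //; lra.
Qed.

Lemma avg_inr f n i : avg f (inr (n, i)) = (f (inl n) + f (inl n.+1)) / 2.
Proof. by rewrite /avg /deg /= !big_cons big_nil addr0 mulrC. Qed.

Lemma lmean_ub f m c : (forall i, f (inr (m, i)) <= c) -> lmean f m <= c.
Proof.
move=> fc; rewrite /lmean ler_pdivrMl ?ltr0n ?expn_gt0 //.
by rewrite -[X in X%:R](size_iota 0) -sumr_const_seq; apply: ler_sum.
Qed.

Lemma lmean_lb f m c : (forall i, c <= f (inr (m, i))) -> c <= lmean f m.
Proof.
move=> fc; rewrite /lmean ler_pdivlMl ?ltr0n ?expn_gt0 //.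
by rewrite -[X in X%:R](size_iota 0) -sumr_const_seq; apply: ler_sum.
Qed.

Lemma lmeanE f m c : (forall i, f (inr (m, i)) = c) -> lmean f m = c.
Proof. by move=> fc; apply/le_anti; rewrite lmean_ub ?lmean_lb // => i; rewrite fc. Qed.

Lemma lavg_le g h n : (forall m, g m <= h m) -> lavg g n <= lavg h n.
Proof.
move=> gh; case: n => [|m] //=.
by rewrite ler_pM2r ?invr_gt0 // lerD // ler_pM2l // gh.
Qed.

Definition lev (x : vertex) : nat := match x with inl n => n | inr (n, _) => n end.

Lemma nbrs_inl n x : x \in nbrs (inl n) ->
  exists m i, x = inr (m, i) /\ (m = n \/ m.+1 = n).
Proof.
rewrite /= mem_cat => /orP [/mapP [i _ ->]|]; first by exists n, i; split; [|left].
by case: n => [|m] //= /mapP [i _ ->]; exists m, i; split; [|right].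
Qed.

Lemma nbrs_inr m i x : x \in nbrs (inr (m, i)) -> x = inl m \/ x = inl m.+1.
Proof. by rewrite !inE => /orP [/eqP ->|/eqP ->]; [left|right]. Qed.

Lemma lev_nbrs x y : y \in nbrs x -> (lev y <= (lev x).+1)%N.
Proof.
case: x => [n|[m i]]; first by case/nbrs_inl => m' [i' [-> h]] /=; lia.
by case/nbrs_inr => -> /=; lia.
Qed.

(** * Transience *)

Definition hit_prob (v : vertex) (n : nat) (x : vertex) : rat :=
  Ewalk x n (fun p => (v \in p)%:R).

Lemma hit_probS v n x :
  hit_prob v n.+1 x = if x == v then 1 else avg (hit_prob v n) x.
Proof.
rewrite /hit_prob Ewalk_first; case: eqP => [->|/eqP xv].
  rewrite -[RHS](avg_const 1 v); apply: avg_ext => y _.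
  by rewrite -[RHS](Ewalk_const y n 1); apply: Ewalk_ext => p _; rewrite mem_head.
by apply: avg_ext => y _; apply: Ewalk_ext => p _; rewrite in_cons eq_sym (negbTE xv).
Qed.

Lemma hit_prob_le_superharmonic v f :
  (forall x, 0 <= f x) -> 1 <= f v -> (forall x, x != v -> avg f x <= f x) ->
  forall n x, hit_prob v n x <= f x.
Proof.
move=> f0 fv fsup; elim=> [|n IH] x.
  by rewrite /hit_prob Ewalk0 inE eq_sym; case: eqP => [->|].
rewrite hit_probS; case: eqP => [->|/eqP xv] //.
by apply: le_trans (fsup _ xv); apply: avg_le => y _.
Qed.

Lemma return_prob_le_superharmonic v f n :
  (forall x, 0 <= f x) -> 1 <= f v -> (forall x, x != v -> avg f x <= f x) ->
  return_prob v n <= avg f v.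
Proof.
move=> f0 fv fsup; case: n => [|n]; first by rewrite /return_prob /= big_seq1 avg_ge0.
have -> : return_prob v n.+1 = Ewalk v n.+1 (fun p => (v \in behead p)%:R).
  by apply: eq_bigr => p _; rewrite has_pred1; case: ifP; rewrite ?mulr1 ?mulr0.
rewrite Ewalk_first; apply: avg_le => y _.
exact: hit_prob_le_superharmonic.
Qed.

(* Up to a constant, the voltage of a unit current flow from [inl 0] to infinity:
   the 2^n paths between [n] and [n + 1] have total conductance 2^(n-1). *)
Definition phi (x : vertex) : rat :=
  match x with inl n => 2^-1 ^+ n | inr (n, _) => 3 / 4 * 2^-1 ^+ n end.

Lemma phi_gt0 x : 0 < phi x.
Proof. by case: x => [n|[n i]] /=; rewrite ?mulr_gt0 ?exprn_gt0 ?invr_gt0. Qed.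

Lemma phi_superharmonic x : avg phi x <= phi x.
Proof.
case: x => [n|[n i]]; last by rewrite avg_inr /= exprS; lra.
have lmean_phi m : lmean phi m = 3 / 4 * 2^-1 ^+ m by apply: lmeanE.
by rewrite avg_inl; case: n => [|n]; rewrite /= !lmean_phi ?expr0 ?exprS; lra.
Qed.

Definition phi_cap (v x : vertex) : rat := Num.min 1 ((phi v)^-1 * phi x).

Lemma phi_cap_ge0 v x : 0 <= phi_cap v x.
Proof. by rewrite le_min ler01 mulr_ge0 ?invr_ge0 ?ltW ?phi_gt0. Qed.

Lemma phi_cap_id v : phi_cap v v = 1.
Proof. by rewrite /phi_cap mulVf ?lt0r_neq0 ?phi_gt0 // minxx. Qed.

Lemma phi_cap_superharmonic v x : avg (phi_cap v) x <= phi_cap v x.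
Proof.
apply: le_trans (avg_min _ _ _) _; rewrite avg_const avgZ.
by rewrite le_min !ge_min lexx ler_pM2l ?invr_gt0 ?phi_gt0 ?phi_superharmonic ?orbT.
Qed.

Lemma phi_cap_le1 v x : phi_cap v x <= 1.
Proof. by rewrite ge_min lexx. Qed.

Lemma phi_capE v x c : (phi v)^-1 * phi x = c -> c <= 1 -> phi_cap v x = c.
Proof. by rewrite /phi_cap => -> /min_idPr. Qed.

Lemma avg_phi_cap v : avg (phi_cap v) v <= 5 / 6.
Proof.
have h0 k : 2^-1 ^+ k != 0 :> rat by rewrite expf_neq0 // invr_neq0.
case: v => [k|[k i]]; last first.
  rewrite avg_inr (@phi_capE _ (inl k.+1) (2 / 3)); last lra.
    by move: (phi_cap _ _) (phi_cap_le1 (inr (k, i)) (inl k)) => u; lra.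
  by rewrite /= exprS; field; rewrite h0.
rewrite avg_inl; apply: (@le_trans _ _ (lavg (fun m => if m == k then 3 / 4 else 1) k)).
  apply: lavg_le => m; apply: lmean_ub => j; case: eqP => [->|_]; last exact: phi_cap_le1.
  rewrite (@phi_capE _ _ (3 / 4)); [exact: lexx | | lra].
  by rewrite /= mulrCA mulVf ?mulr1.
by case: k => [|k] /=; rewrite ?eqxx ?(ltn_eqF (ltnSn k)); lra.
Qed.

Theorem G_is_transient : G_transient.
Proof.
move=> v _; exists (1 / 6); split=> [|n]; first lra.
apply: le_trans (return_prob_le_superharmonic n (phi_cap_ge0 v) _ _) _.
- by rewrite phi_cap_id.
- by move=> x _; apply: phi_cap_superharmonic.
- by apply: le_trans (avg_phi_cap v) _; lra.
Qed.

(** * Meetings of two independent walks *)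

Definition avg2 (f : vertex * vertex -> rat) (s : vertex * vertex) : rat :=
  avg (fun x => avg (fun y => f (x, y)) s.2) s.1.

Lemma avg2_le f g s :
  (forall x y, x \in nbrs s.1 -> y \in nbrs s.2 -> f (x, y) <= g (x, y)) ->
  avg2 f s <= avg2 g s.
Proof. by move=> fg; apply: avg_le => x hx; apply: avg_le => y hy; apply: fg. Qed.

Lemma avg2_ext f g s : f =1 g -> avg2 f s = avg2 g s.
Proof. by move=> fg; apply/le_anti; rewrite !avg2_le // => x y _ _; rewrite fg. Qed.

Lemma avg2_const c s : avg2 (fun=> c) s = c.
Proof. by rewrite /avg2 (avg_ext (g := fun=> c)) ?avg_const // => x _; rewrite avg_const. Qed.

Lemma avg2_ge0 f s : (forall s', 0 <= f s') -> 0 <= avg2 f s.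
Proof. by move=> f0; rewrite -(avg2_const 0 s); apply: avg2_le. Qed.

Lemma avg2D f g s : avg2 (fun s' => f s' + g s') s = avg2 f s + avg2 g s.
Proof. by rewrite /avg2 -avgD; apply: avg_ext => x _; rewrite avgD. Qed.

Lemma avg2Z c f s : avg2 (fun s' => c * f s') s = c * avg2 f s.
Proof. by rewrite /avg2 -avgZ; apply: avg_ext => x _; rewrite avgZ. Qed.

Lemma avg2_compl f s : avg2 (fun s' => 1 - f s') s = 1 - avg2 f s.
Proof.
rewrite (avg2_ext _ (g := fun s' => 1 + (-1) * f s')) => [|s']; last by rewrite mulN1r.
by rewrite (avg2D (fun=> 1)) avg2Z avg2_const mulN1r.
Qed.

Lemma Ewalk_avg v n (F : seq vertex -> vertex -> rat) y :
  Ewalk v n (fun p => avg (F p) y) = avg (fun z => Ewalk v n (fun p => F p z)) y.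
Proof.
rewrite /Ewalk /avg exchange_big /= [RHS]mulr_sumr; apply: eq_bigr => p _.
by rewrite mulrCA !mulr_sumr.
Qed.

Fixpoint meet_atleast (n k : nat) (s : vertex * vertex) : rat :=
  if n is n'.+1 then avg2 (fun s' => meet_atleast n' (k - (s'.1 == s'.2)) s') s
  else (k == 0)%:R.

Lemma meetings_cons d n x y p q :
  meetings d n.+1 (x :: p) (y :: q) =
  ((nth d p 0 == nth d q 0) + meetings d n p q)%N.
Proof. by rewrite /meetings /= -[2%N]/(1 + 1)%N iotaDl count_map. Qed.

Lemma Ewalk_meetings d n k x y :
  Ewalk x n (fun p => Ewalk y n (fun q => (k <= meetings d n p q)%N%:R)) =
  meet_atleast n k (x, y).
Proof.
elim: n k x y => [|n IH] k x y; first by rewrite !Ewalk0 /meetings /= leqn0.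
rewrite Ewalk_first [RHS]/= /avg2 /=; apply: avg_ext => x' _.
under eq_Ewalk => p do rewrite Ewalk_first.
rewrite Ewalk_avg; apply: avg_ext => y' _; rewrite -IH.
apply: Ewalk_ext => p /walks_head [r ->]; apply: Ewalk_ext => q /walks_head [r' ->].
by rewrite meetings_cons /= leq_subLR.
Qed.

Lemma meet_probE v k n : meet_prob v k n = meet_atleast n k (v, v).
Proof.
rewrite -(Ewalk_meetings v); apply: eq_bigr => p _; rewrite /Ewalk mulr_sumr.
by apply: eq_bigr => q _; case: ifP; rewrite ?mulr1 ?mulr0 // mulrCA mulr1.
Qed.

Lemma meet_atleast0 n s : meet_atleast n 0 s = 1.
Proof.
elim: n s => [|n IH] s //=.
by rewrite -(avg2_const 1 s); apply: avg2_ext => s'; rewrite sub0n IH.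
Qed.

Lemma meet_atleast_ge0 n k s : 0 <= meet_atleast n k s.
Proof. by elim: n k s => [|n IH] k s /=; [exact: ler0n | exact: avg2_ge0]. Qed.

Lemma meet_atleast_succ n k s : meet_atleast n k s <= meet_atleast n.+1 k s.
Proof.
elim: n k s => [|n IH] k s; last by apply: avg2_le => x y _ _; apply: IH.
by case: k => [|k]; rewrite ?meet_atleast0 ?meet_atleast_ge0.
Qed.

Lemma meet_atleast_mono m n k s : (m <= n)%N -> meet_atleast m k s <= meet_atleast n k s.
Proof.
move=> mn; apply: (Order.NatMonotonyTheory.nondecnP (f := fun i => meet_atleast i k s)) mn.
by move=> i; apply: meet_atleast_succ.
Qed.

Definition kill (f : vertex * vertex -> rat) (s : vertex * vertex) : rat :=
  if s.1 == s.2 then 0 else f s.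

(* [Enomeet T f s] is the expectation of [f] at time [T] on the event that the
   two walks started at [s] do not meet at any time in [1..T]. *)
Fixpoint Enomeet (T : nat) (f : vertex * vertex -> rat) (s : vertex * vertex) : rat :=
  if T is T'.+1 then avg2 (kill (Enomeet T' f)) s else f s.

Definition Pnomeet (T : nat) (s : vertex * vertex) : rat := Enomeet T (fun=> 1) s.

Lemma EnomeetDn a b f s : Enomeet (a + b) f s = Enomeet a (Enomeet b f) s.
Proof. by elim: a s => [|a IH] s //=; apply: avg2_ext => s'; rewrite /kill IH. Qed.

Lemma Enomeet_lin T a b f g s :
  Enomeet T (fun s' => a * f s' + b * g s') s = a * Enomeet T f s + b * Enomeet T g s.
Proof.
elim: T s => [|T IH] s //=; rewrite -!avg2Z -avg2D; apply: avg2_ext => s'.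
by rewrite /kill; case: ifP => _; rewrite ?IH // !mulr0 addr0.
Qed.

Lemma Enomeet_ge0 T f s : (forall s', 0 <= f s') -> 0 <= Enomeet T f s.
Proof.
move=> f0; elim: T s => [|T IH] s //=.
by apply: avg2_ge0 => s'; rewrite /kill; case: ifP.
Qed.

Lemma EnomeetS_le T f g s :
  (forall x y, x \in nbrs s.1 -> y \in nbrs s.2 -> x != y ->
     Enomeet T f (x, y) <= Enomeet T g (x, y)) ->
  Enomeet T.+1 f s <= Enomeet T.+1 g s.
Proof.
by move=> fg; apply: avg2_le => x y hx hy; rewrite /kill /=; case: eqP => // /eqP; apply: fg.
Qed.

Lemma EnomeetS_ub T f s c : 0 <= c ->
  (forall x y, x \in nbrs s.1 -> y \in nbrs s.2 -> x != y -> Enomeet T f (x, y) <= c) ->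
  Enomeet T.+1 f s <= c.
Proof.
move=> c0 fc; rewrite -(avg2_const c s); apply: avg2_le => x y hx hy.
by rewrite /kill /=; case: eqP => // /eqP; apply: fc.
Qed.

Lemma Pnomeet_ge0 T s : 0 <= Pnomeet T s.
Proof. exact: Enomeet_ge0. Qed.

Lemma Pnomeet_le1 T s : Pnomeet T s <= 1.
Proof.
rewrite /Pnomeet; elim: T s => [|T IH] s //=; rewrite -[leRHS](avg2_const 1 s).
by apply: avg2_le => x y _ _; rewrite /kill; case: ifP => _; [exact: ler01 | exact: IH].
Qed.

Lemma Pnomeet_succ T s : Pnomeet T.+1 s <= Pnomeet T s.
Proof.
rewrite /Pnomeet; elim: T s => [|T IH] s; first exact: (Pnomeet_le1 1 s).
by apply: avg2_le => x y _ _; rewrite /kill; case: ifP => // _; apply: IH.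
Qed.

Lemma Pnomeet_antimono m n s : (m <= n)%N -> Pnomeet n s <= Pnomeet m s.
Proof.
move=> mn; apply: (Order.NatMonotonyTheory.nonincnP (f := Pnomeet^~ s)) mn.
by move=> i; apply: Pnomeet_succ.
Qed.

Lemma meet_atleast1 n s : meet_atleast n 1 s = 1 - Pnomeet n s.
Proof.
elim: n s => [|n IH] s; first by rewrite /= subrr.
rewrite /Pnomeet /= -avg2_compl; apply: avg2_ext => s'; rewrite /kill.
by case: eqP => _ /=; rewrite ?meet_atleast0 ?IH /Pnomeet; lra.
Qed.

Lemma avg2_inr m i m' j f : avg2 f (inr (m, i), inr (m', j)) =
  (f (inl m, inl m') + f (inl m, inl m'.+1) + f (inl m.+1, inl m') + f (inl m.+1, inl m'.+1)) / 4.
Proof. by rewrite /avg2 !avg_inr /=; lra. Qed.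

Lemma avg2_inl_le g h a b :
  (forall m i m' j, g (inr (m, i), inr (m', j)) <= h m m') ->
  avg2 g (inl a, inl b) <= lavg (fun m => lavg (h m) b) a.
Proof.
move=> gh; rewrite /avg2 avg_inl; apply: lavg_le => m; apply: lmean_ub => i.
by rewrite avg_inl; apply: lavg_le => m'; apply: lmean_ub => j; apply: gh.
Qed.

Lemma avg2_inl_ge g h a b :
  (forall m i m' j, h m m' <= g (inr (m, i), inr (m', j))) ->
  lavg (fun m => lavg (h m) b) a <= avg2 g (inl a, inl b).
Proof.
move=> hg; rewrite /avg2 avg_inl; apply: lavg_le => m; apply: lmean_lb => i.
by rewrite avg_inl; apply: lavg_le => m'; apply: lmean_lb => j; apply: hg.
Qed.

(* A Lyapunov function for the difference of the levels of the two walks,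
   observed at even times: [lyap] is a supermartingale until they meet. *)
Definition lyap (d : int) : rat := if d == 0 then 0 else `|d|%:~R + 1.

Definition lyap_pair (s : vertex * vertex) : rat :=
  if s is (inl a, inl b) then lyap (a%:Z - b%:Z) else 0.

Definition lyap_mid (e : int) : rat := (lyap e + lyap (e - 1) + lyap (e + 1) + lyap e) / 4.

Lemma lyap_ge0 d : 0 <= lyap d.
Proof. by rewrite /lyap; case: eqP => // _; rewrite addr_ge0 ?ler0z. Qed.

Lemma lyap_pair_ge0 s : 0 <= lyap_pair s.
Proof. by case: s => [[a|[]] [b|[]]] //=; apply: lyap_ge0. Qed.

Lemma avg2_lyap_pair_inr m i m' j :
  avg2 lyap_pair (inr (m, i), inr (m', j)) = lyap_mid (m%:Z - m'%:Z).
Proof.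
rewrite avg2_inr /lyap_mid /=.
by congr (_ / 4); congr (_ + _ + _ + _); congr lyap; lia.
Qed.

Lemma lyap_pos d : 0 < d -> lyap d = d%:~R + 1.
Proof. by move=> d0; rewrite /lyap gt_eqF // gtr0_norm. Qed.

Lemma lyap_neg d : d < 0 -> lyap d = - d%:~R + 1.
Proof. by move=> d0; rewrite /lyap lt_eqF // ltr0_norm // intrN. Qed.

Lemma lyap0 d : d = 0 -> lyap d = 0.
Proof. by move=> ->. Qed.

Lemma int_cases (d : int) :
  d <= -3 \/ d = -2 \/ d = -1 \/ d = 0 \/ d = 1 \/ d = 2 \/ 3 <= d.
Proof. lia. Qed.

Ltac lyap_cases d :=
  case: (int_cases d) => [?|[?|[?|[?|[?|[?|?]]]]]]; subst; try (exfalso; lia);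
  rewrite /lyap_mid;
  repeat match goal with |- context [lyap ?z] =>
    first [ rewrite (@lyap_pos z); last lia
          | rewrite (@lyap_neg z); last lia
          | rewrite (@lyap0 z); last lia ] end;
  rewrite ?intrD ?intrB ?intrN; lra.

Lemma lyap_mid_step d d1 d2 d3 : d1 = d + 1 -> d2 = d - 1 -> d3 = d -> d != 0 ->
  (2 * ((2 * lyap_mid d + lyap_mid d1) / 3) + (2 * lyap_mid d2 + lyap_mid d3) / 3) / 3
    <= lyap d.
Proof. by move=> -> -> -> d0; lyap_cases d. Qed.

Lemma lyap_mid_step_neg e e1 : e1 = e + 1 -> e <= -1 ->
  (2 * lyap_mid e + lyap_mid e1) / 3 <= lyap e.
Proof. by move=> -> e0; lyap_cases e. Qed.

Lemma lyap_mid_step_pos e e1 : e1 = e - 1 -> 1 <= e ->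
  (2 * lyap_mid e + lyap_mid e1) / 3 <= lyap e.
Proof. by move=> -> e0; lyap_cases e. Qed.

Lemma avg2_avg2_lyap_pair a b : a != b ->
  avg2 (avg2 lyap_pair) (inl a, inl b) <= lyap_pair (inl a, inl b).
Proof.
move=> ab; apply: le_trans (avg2_inl_le (h := fun m m' => lyap_mid (m%:Z - m'%:Z)) _ _ _) _.
  by move=> m i m' j; rewrite avg2_lyap_pair_inr.
case: a b ab => [|a] [|b] //= ab.
- by apply: lyap_mid_step_neg; lia.
- by apply: lyap_mid_step_pos; lia.
- by apply: lyap_mid_step; lia.
Qed.

Lemma Enomeet2_le f g a b :
  (forall a' b', a' != b' -> f (inl a', inl b') <= g (inl a', inl b')) ->
  Enomeet 2 f (inl a, inl b) <= Enomeet 2 g (inl a, inl b).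
Proof.
move=> fg; apply: EnomeetS_le => x y /nbrs_inl [m [i [-> _]]] /nbrs_inl [m' [j [-> _]]] _.
apply: EnomeetS_le => x' y' /nbrs_inr [->|->] /nbrs_inr [->|->] /= ne; apply: fg;
  by apply: contra ne => /eqP ->.
Qed.

Lemma Enomeet_even_le j f g a b :
  (forall a' b', a' != b' -> f (inl a', inl b') <= g (inl a', inl b')) ->
  a != b -> Enomeet (2 * j) f (inl a, inl b) <= Enomeet (2 * j) g (inl a, inl b).
Proof.
move=> fg; elim: j a b => [|j IH] a b ab; first exact: fg.
by rewrite mulnS !EnomeetDn; apply: Enomeet2_le => a' b'; apply: IH.
Qed.

Lemma Enomeet_lyap_pair j a b : a != b ->
  Enomeet (2 * j) lyap_pair (inl a, inl b) <= lyap_pair (inl a, inl b).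
Proof.
elim: j a b => [|j IH] a b ab; first by rewrite muln0.
rewrite mulnS EnomeetDn; apply: le_trans (Enomeet2_le a b IH) _.
apply: le_trans (avg2_avg2_lyap_pair ab); apply: avg2_le => x y _ _.
rewrite /kill; case: ifP => _; first exact: avg2_ge0 lyap_pair_ge0.
by apply: avg2_le => x' y' _ _; rewrite /kill; case: ifP => _ //; apply: lyap_pair_ge0.
Qed.

Lemma lavg_ge0 g n : (forall m, 0 <= g m) -> 0 <= lavg g n.
Proof. by move=> g0; case: n => [|n] //=; rewrite divr_ge0 ?addr_ge0 ?mulr_ge0. Qed.

Lemma lavg_ge_same g n : (forall m, 0 <= g m) -> 2 / 3 * g n <= lavg g n.
Proof. by move=> g0; case: n => [|n] /=; [have := g0 0%N | have := g0 n]; lra. Qed.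

Lemma lavg_ge_down g n : (forall m, 0 <= g m) -> g n / 3 <= lavg g n.+1.
Proof. by move=> g0 /=; have := g0 n.+1; lra. Qed.

(* Probability that the walks started at [s] meet at some time in [0..T]. *)
Definition Pmeet (T : nat) (s : vertex * vertex) : rat := 1 - kill (Pnomeet T) s.

Lemma Pmeet_ge0 T s : 0 <= Pmeet T s.
Proof. by rewrite /Pmeet /kill; case: ifP => _; rewrite subr_ge0 ?ler01 ?Pnomeet_le1. Qed.

Lemma Pmeet_le1 T s : Pmeet T s <= 1.
Proof. by rewrite /Pmeet /kill; case: ifP => _; rewrite gerBl ?lexx ?Pnomeet_ge0. Qed.

Lemma PmeetS T s : Pmeet T.+1 s = if s.1 == s.2 then 1 else avg2 (Pmeet T) s.
Proof. by rewrite /Pmeet {1}/kill; case: ifP => _; rewrite ?subr0 // -avg2_compl. Qed.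

Lemma Pmeet_inr_ge T m i m' j :
  Pmeet T (inl m, inl m') / 4 <= Pmeet T.+1 (inr (m, i), inr (m', j)).
Proof.
rewrite PmeetS; case: ifP => _; first by have := Pmeet_le1 T (inl m, inl m'); lra.
rewrite avg2_inr; have h0 := Pmeet_ge0 T.
have := h0 (inl m, inl m'.+1); have := h0 (inl m.+1, inl m'); have := h0 (inl m.+1, inl m'.+1).
lra.
Qed.

Lemma exp18_gt0 M : 0 < 18^-1 ^+ M :> rat.
Proof. by apply: exprn_gt0; lra. Qed.

Lemma exp18_le1 M : 18^-1 ^+ M <= 1 :> rat.
Proof. by apply: exprn_ile1; lra. Qed.

(* From levels at distance [j], the walks can meet within [2 j] steps by having
   the upper one go down while the lower one stays put: probability >= 18^-j. *)
Lemma Pmeet_inl_ge j a b : (a = b + j \/ b = a + j)%N ->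
  18^-1 ^+ j <= Pmeet (2 * j) (inl a, inl b).
Proof.
elim: j a b => [|j IH] a b hab.
  have -> : a = b by lia.
  by rewrite /Pmeet /kill /= eqxx subr0 expr0.
have ab : (inl a == inl b :> vertex) = false by apply/eqP => -[]; lia.
pose c : rat := 18^-1 ^+ j / 4.
have c0 : 0 <= c by have := exp18_gt0 j; rewrite /c; lra.
have -> : 18^-1 ^+ j.+1 = 2 / 9 * c :> rat by rewrite exprS /c; lra.
have -> : (2 * j.+1 = (2 * j).+1.+1)%N by lia.
rewrite PmeetS /= ab.
have mid m i m' k : (m = m' + j \/ m' = m + j)%N ->
    c <= Pmeet (2 * j).+1 (inr (m, i), inr (m', k)).
  by move=> hm; apply: le_trans (Pmeet_inr_ge _ _ _ _ _); rewrite ler_pM2r ?IH.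
pose h (m0 m0' m m' : nat) := if (m == m0) && (m' == m0') then c else 0.
have h0 (m0 m0' m m' : nat) : 0 <= h m0 m0' m m' by rewrite /h; case: ifP.
case: hab => [->|->]; rewrite addnS.
- apply: le_trans (avg2_inl_ge (h := h (b + j)%N b) _ _ _) => [|m i m' k].
    have := lavg_ge_same b (h0 (b + j)%N b (b + j)%N).
    have -> : h (b + j)%N b (b + j)%N b = c by rewrite /h !eqxx.
    move=> hc.
    by apply: le_trans (lavg_ge_down (b + j) (fun m => lavg_ge0 b (h0 _ _ m))); lra.
  rewrite /h; case: andP => [[/eqP -> /eqP ->]|_]; last exact: Pmeet_ge0.
  by apply: mid; left.
- apply: le_trans (avg2_inl_ge (h := h a (a + j)%N) _ _ _) => [|m i m' k].
    have := lavg_ge_down (a + j) (h0 a (a + j)%N a).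
    have -> : h a (a + j)%N a (a + j)%N = c by rewrite /h !eqxx.
    move=> hc.
    by apply: le_trans (lavg_ge_same a (fun m => lavg_ge0 (a + j).+1 (h0 _ _ m))); lra.
  rewrite /h; case: andP => [[/eqP -> /eqP ->]|_]; last exact: Pmeet_ge0.
  by apply: mid; right.
Qed.

Lemma bernoulli_le1 (R : realDomainType) (q : R) k :
  0 <= q <= 1 -> (1 - q) ^+ k * (1 + k%:R * q) <= 1.
Proof.
case/andP=> q0 q1; elim: k => [|k IH]; first by rewrite expr0 mul0r; lra.
have r0 : 0 <= (1 - q) ^+ k by rewrite exprn_ge0 // subr_ge0.
have step : (1 - q) * (1 + k.+1%:R * q) <= 1 + k%:R * q.
  have : 0 <= k%:R * q * q by rewrite !mulr_ge0.
  by rewrite -addn1 natrD; nra.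
by rewrite exprSr -mulrA; apply: le_trans IH; apply: ler_wpM2l.
Qed.

Lemma exists_nat_ge (R : archiRealFieldType) (x : R) : exists n : nat, x <= n%:R.
Proof.
have [x0|x0] := lerP 0 x; first by exists (Num.bound x); apply/ltW/archi_boundP.
by exists 0%N; apply/ltW.
Qed.

Lemma exists_expr_le (R : archiRealFieldType) (r eps : R) :
  0 <= r < 1 -> 0 < eps -> exists k, r ^+ k <= eps.
Proof.
case/andP=> r0 r1 e0; set q := 1 - r.
have q0 : 0 < q by rewrite subr_gt0.
have [k hk] := exists_nat_ge (q * eps)^-1.
have qb : 0 <= q <= 1 by apply/andP; split; rewrite /q; lra.
exists k; have := bernoulli_le1 k qb; rewrite [1 - q]subKr.
have rk0 : 0 <= r ^+ k by rewrite exprn_ge0.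
have keq : 1 <= k%:R * (q * eps) by rewrite -ler_pdivrMr ?mulr_gt0 // div1r.
have : r ^+ k <= r ^+ k * (k%:R * (q * eps)) by rewrite ler_peMr.
nra.
Qed.

Lemma Pnomeet_near M a b : a != b -> (a <= b + M)%N -> (b <= a + M)%N ->
  Pnomeet (2 * M) (inl a, inl b) <= 1 - 18^-1 ^+ M.
Proof.
move=> ab baM abM.
have [j [hj jM]] : exists j, (a = b + j \/ b = a + j)%N /\ (j <= M)%N.
  by case: (leqP a b) => hab; [exists (b - a)%N | exists (a - b)%N]; split; lia.
have ne : (inl a == inl b :> vertex) = false by apply/eqP => -[] /eqP; apply/negP.
have := Pmeet_inl_ge hj; rewrite /Pmeet /kill /= ne => hmeet.
have qjM : 18^-1 ^+ M <= 18^-1 ^+ j :> rat by apply: ler_wiXn2l jM; lra.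
have := @Pnomeet_antimono (2 * j) (2 * M) (inl a, inl b) ltac:(lia); lra.
Qed.

Lemma lyap_far a b M : (a + M < b \/ b + M < a)%N -> M%:R + 1 <= lyap (a%:Z - b%:Z).
Proof.
move=> far; rewrite /lyap; case: eqP => [?|_]; first lia.
have : M%:Z <= `|a%:Z - b%:Z| by lia.
by rewrite -(ler_int rat); lra.
Qed.

(* Split time into [k] blocks of length [2 M]: while the levels are within [M],
   each block brings a meeting with probability at least 18^-M; getting farther
   apart costs a factor [M + 1] by Markov's inequality for [lyap]. *)
Lemma Pnomeet_blocks M k a b : a != b ->
  Pnomeet (2 * M * k) (inl a, inl b) <=
    lyap_pair (inl a, inl b) / (M%:R + 1) + (1 - 18^-1 ^+ M) ^+ k.
Proof.
have M1 : 0 < M%:R + 1 :> rat by rewrite ltr_pwDr ?ler0n.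
set r := 1 - _; have r0 : 0 <= r by rewrite subr_ge0 exp18_le1.
elim: k a b => [|k IH] a b ab.
  rewrite muln0 expr0 /Pnomeet /=.
  by have := divr_ge0 (lyap_ge0 (a%:Z - b%:Z)) (ltW M1); lra.
have [/andP [baM abM]|far] := boolP ((a <= b + M)%N && (b <= a + M)%N); last first.
  apply: le_trans (Pnomeet_le1 _ _) _.
  have : 1 <= lyap_pair (inl a, inl b) / (M%:R + 1).
    by rewrite ler_pdivlMr // mul1r; apply: lyap_far; lia.
  by have := exprn_ge0 k.+1 r0; lra.
rewrite /Pnomeet mulnS EnomeetDn.
apply: le_trans (Enomeet_even_le M
  (g := fun s => (M%:R + 1)^-1 * lyap_pair s + r ^+ k * 1) _ ab) _.
  by move=> a' b' ne; rewrite mulr1 mulrC; apply: IH.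
rewrite Enomeet_lin -/(Pnomeet _ _) exprS.
have := Enomeet_lyap_pair M ab; have := Pnomeet_near ab baM abM; have := exprn_ge0 k r0.
set V := lyap_pair _; set X := Enomeet _ _ _; set Y := Pnomeet _ _; set R := r ^+ k.
move=> R0 hY hX.
have : (M%:R + 1)^-1 * X <= V / (M%:R + 1) by rewrite mulrC ler_pM2r ?invr_gt0.
rewrite -/r in hY; nra.
Qed.

Lemma Pnomeet_small eps D : 0 < eps ->
  exists n, forall a b, a != b -> (a <= b + D)%N -> (b <= a + D)%N ->
    Pnomeet n (inl a, inl b) <= eps.
Proof.
move=> e0.
have [M hM] := exists_nat_ge (2 * (D%:R + 1) / eps).
have qM : 0 <= (1 - 18^-1 ^+ M : rat) < 1.
  by have := exp18_gt0 M; have := exp18_le1 M; move=> ? ?; apply/andP; split; lra.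
have [k hk] : exists k, (1 - 18^-1 ^+ M) ^+ k <= eps / 2.
  by apply: exists_expr_le qM _; lra.
exists (2 * M * k)%N => a b ab baD abD.
apply: le_trans (Pnomeet_blocks M k ab) _.
have : lyap_pair (inl a, inl b) <= D%:R + 1.
  rewrite /= /lyap; case: eqP => _; first by rewrite addr_ge0.
  have : `|a%:Z - b%:Z| <= D%:Z by lia.
  by rewrite -(ler_int rat); lra.
have : 2 * (D%:R + 1) <= M%:R * eps by rewrite -ler_pdivrMr.
have M1 : 0 < M%:R + 1 :> rat by rewrite ltr_pwDr ?ler0n.
move=> hMe hV; have : lyap_pair (inl a, inl b) / (M%:R + 1) <= eps / 2.
  by rewrite ler_pdivrMr //; nra.
lra.
Qed.

Lemma Pnomeet_diag_small eps : 0 < eps -> exists N, forall w, Pnomeet N (w, w) <= eps.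
Proof.
move=> e0; have [n hn] := Pnomeet_small 2 e0.
have near m i m' j x y : (m <= m'.+1)%N -> (m' <= m.+1)%N ->
    x \in nbrs (inr (m, i)) -> y \in nbrs (inr (m', j)) -> x != y -> Pnomeet n (x, y) <= eps.
  move=> mm' m'm /nbrs_inr hx /nbrs_inr hy.
  by case: hx => ->; case: hy => -> ne; apply: hn; try lia; apply: contra ne => /eqP ->.
exists (n + 2)%N => -[a|[m i]].
- rewrite /Pnomeet addnC EnomeetDn; apply: EnomeetS_ub => [|x y]; first lra.
  move=> /nbrs_inl [m1 [i1 [-> h1]]] /nbrs_inl [m2 [i2 [-> h2]]] _.
  apply: EnomeetS_ub => [|x' y' hx hy]; first lra.
  by apply: near hx hy; lia.
- apply: le_trans (@Pnomeet_antimono (1 + n) (n + 2) _ ltac:(lia)) _.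
  rewrite /Pnomeet EnomeetDn; apply: EnomeetS_ub => [|x y hx hy]; first lra.
  exact: near hx hy.
Qed.

Lemma meet_once_diag eps : 0 < eps -> exists N, forall w, 1 - eps <= meet_atleast N 1 (w, w).
Proof.
move=> e0; have [N hN] := Pnomeet_diag_small e0.
by exists N => w; rewrite meet_atleast1; have := hN w; lra.
Qed.

(* Markov property at the first meeting: after it, the walks start afresh from a
   common vertex, whose level is at most [n] above the starting levels. *)
Lemma meet_atleast_restart n m k d L x y : 0 <= d ->
  (lev x <= L)%N -> (lev y <= L)%N ->
  (forall w, (lev w <= L + n)%N -> d <= meet_atleast m k (w, w)) ->
  d * meet_atleast n 1 (x, y) <= meet_atleast (n + m) k.+1 (x, y).
Proof.
move=> d0; elim: n L x y => [|n IH] L x y hx hy hw; first by rewrite /= mulr0 meet_atleast_ge0.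
rewrite addSn /= -avg2Z; apply: avg2_le => x' y' hx' hy' /=.
have lx : (lev x' <= (lev x).+1)%N := lev_nbrs hx'.
have ly : (lev y' <= (lev y).+1)%N := lev_nbrs hy'.
case: eqP => [<-|/eqP ne] /=.
  rewrite subnn meet_atleast0 mulr1 subSS subn0.
  apply: le_trans (hw x' _) (meet_atleast_mono _ _ _); lia.
by rewrite !subn0; apply: (IH L.+1); try lia; move=> w hlw; apply: hw; lia.
Qed.

Lemma meet_atleast_diag k eps L : 0 < eps ->
  exists N, forall w, (lev w <= L)%N -> 1 - eps <= meet_atleast N k.+1 (w, w).
Proof.
elim: k eps L => [|k IH] eps L e0.
  by have [N hN] := meet_once_diag e0; exists N => w _; apply: hN.
have [e1|e1] := lerP eps 1; last first.
  by exists 0%N => w _; have := meet_atleast_ge0 0 k.+2 (w, w); lra.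
have e2 : 0 < eps / 2 by lra.
have [N1 h1] := meet_once_diag e2.
have [N2 h2] := IH (eps / 2) (L + N1)%N e2.
exists (N1 + N2)%N => w hw.
have := meet_atleast_restart (d := 1 - eps / 2) ltac:(lra) hw hw h2.
by have := h1 w; nra.
Qed.

Theorem G_meets_infinitely_often : G_meet_io_as.
Proof.
move=> v _ [|k] eps e0; first by exists 0%N; rewrite meet_probE meet_atleast0; lra.
by have [N hN] := meet_atleast_diag k (lev v) e0; exists N; rewrite meet_probE; apply: hN.
Qed.

Theorem mainTheorem11 : G_transient /\ G_meet_io_as.
Proof. exact: (conj G_is_transient G_meets_infinitely_often). Qed.
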